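(* (Cauchy–Schwarz inequality) Let $V$ be a vector space over $\mathbb{K}$ and let $F$ be a geometric mean closed Archimedean vector lattice over $\mathbb{K}$. Let $T\colon V\times V\to F$ be positive semidefinite, conjugate symmetric and sesquilinear. Then for all $u,v\in V$: (1) $\inf_{z\in\mathbb{K}\setminus\{0\}}\{|z|^{-1}T(zu-v,zu-v)\}$ exists in $F$; (2) $|T(u,v)|=T(u,u)\boxtimes T(v,v)-2^{-1}\inf_{z\in\mathbb{K}\setminus\{0\}}\{|z|^{-1}T(zu-v,zu-v)\}$; (3) $|T(u,v)|\le T(u,u)\boxtimes T(v,v)$; (4) $|T(u,v)|=T(u,u)\boxtimes T(v,v)$ if and only if $\inf_{z\in\mathbb{K}\setminus\{0\}}\{|z|^{-1}T(zu-v,zu-v)\}=0$.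
   Context: $\mathbb{K}$ denotes $\mathbb{R}$ or $\mathbb{C}$. An Archimedean real vector lattice $E$ is square mean closed if $\sup\{(\cos\theta)f+(\sin\theta)g:\theta\in[0,2\pi]\}$ exists in $E$ for all $f,g\in E$. An Archimedean vector lattice over $\mathbb{C}$ is a complex vector space $E+iE$ (complexification) where $E$ is a square mean closed Archimedean real vector lattice; its modulus is $|f+ig|=\sup\{(\cos\theta)f+(\sin\theta)g:\theta\in[0,2\pi]\}$. An Archimedean vector lattice over $\mathbb{R}$ is an Archimedean real vector lattice with $|f|=f\vee(-f)$. For an Archimedean vector lattice $E$ over $\mathbb{K}$: positive cone $E^{+}=\{f\in E:|f|=f\}$, real part $E_\rho=\{f-g:f,g\in E^+\}$, with the order of $E_\rho$; infima and suprema are taken in $E_\rho$. $E$ is geometric mean closed if $\inf\{\theta f+\theta^{-1}g:\theta\in(0,\infty)\}$ exists in $E_\rho$ for all $f,g\in E^+$, and then $f\boxtimes g=2^{-1}\inf\{\theta f+\theta^{-1}g:\theta\in(0,\infty)\}$. Complex conjugation on $E$: $\overline{f+ig}=f-ig$ ($f,g\in E_\rho$; trivial in the real case). A map $T\colon V\times V\to F$ is positive semidefinite if $T(v,v)\ge0$ for all $v$; conjugate symmetric if $T(u,v)=\overline{T(v,u)}$; sesquilinear if it is linear in the first variable and conjugate linear in the second: $T(u,\alpha v_1+\beta v_2)=\bar\alpha T(u,v_1)+\bar\beta T(u,v_2)$. *)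

From Stdlib Require Import Reals Lra ClassicalEpsilon.
Open Scope R_scope.
Set Implicit Arguments.

Definition is_sup {A : Type} (le : A -> A -> Prop) (S : A -> Prop) (s : A) : Prop :=
  (forall x, S x -> le x s) /\ (forall b, (forall x, S x -> le x b) -> le s b).

Record RVL := {
  car : Type;
  zero : car;
  add : car -> car -> car;
  opp : car -> car;
  smul : R -> car -> car;
  le : car -> car -> Prop;
  add_assoc : forall x y z, add x (add y z) = add (add x y) z;
  add_comm : forall x y, add x y = add y x;
  add_0 : forall x, add zero x = x;
  add_opp : forall x, add x (opp x) = zero;
  smul_assoc : forall a b x, smul a (smul b x) = smul (a * b) x;
  smul_1 : forall x, smul 1 x = x;
  smul_distr_l : forall a x y, smul a (add x y) = add (smul a x) (smul a y);
  smul_distr_r : forall a b x, smul (a + b) x = add (smul a x) (smul b x);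
  le_refl : forall x, le x x;
  le_antisym : forall x y, le x y -> le y x -> x = y;
  le_trans : forall x y z, le x y -> le y z -> le x z;
  le_add : forall x y z, le x y -> le (add x z) (add y z);
  le_smul : forall a x, 0 <= a -> le zero x -> le zero (smul a x);
  sup2_ex : forall x y, exists s, is_sup le (fun z => z = x \/ z = y) s;
  archimedean : forall x y, le zero x ->
      (forall n : nat, le (smul (INR n) x) y) -> x = zero
}.

Definition square_mean_closed (E : RVL) : Prop :=
  forall f g : car E, exists s, is_sup (le E)
    (fun x => exists t, 0 <= t <= 2 * PI /\
       x = add E (smul E (cos t) f) (smul E (sin t) g)) s.

(** chosen supremum (meaningful when it exists) *)
Definition esup (E : RVL) (S : car E -> Prop) : car E :=
  epsilon (inhabits (zero E)) (is_sup (le E) S).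

Inductive fld := Kreal | Kcomplex.

Definition Kty (k : fld) : Type :=
  match k with Kreal => R | Kcomplex => (R * R)%type end.

Definition Kzero (k : fld) : Kty k :=
  match k as k0 return Kty k0 with Kreal => 0 | Kcomplex => (0, 0) end.
Definition Kone (k : fld) : Kty k :=
  match k as k0 return Kty k0 with Kreal => 1 | Kcomplex => (1, 0) end.
Definition Kofreal (k : fld) (r : R) : Kty k :=
  match k as k0 return Kty k0 with Kreal => r | Kcomplex => (r, 0) end.
Definition Kadd {k : fld} : Kty k -> Kty k -> Kty k :=
  match k as k0 return Kty k0 -> Kty k0 -> Kty k0 with
  | Kreal => fun a b => a + b
  | Kcomplex => fun a b => (fst a + fst b, snd a + snd b) end.
Definition Kmul {k : fld} : Kty k -> Kty k -> Kty k :=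
  match k as k0 return Kty k0 -> Kty k0 -> Kty k0 with
  | Kreal => fun a b => a * b
  | Kcomplex => fun a b => (fst a * fst b - snd a * snd b,
                            fst a * snd b + snd a * fst b) end.
Definition Kconj {k : fld} : Kty k -> Kty k :=
  match k as k0 return Kty k0 -> Kty k0 with
  | Kreal => fun a => a
  | Kcomplex => fun a => (fst a, - snd a) end.
Definition Knorm {k : fld} : Kty k -> R :=
  match k as k0 return Kty k0 -> R with
  | Kreal => fun a => Rabs a
  | Kcomplex => fun a => sqrt (fst a * fst a + snd a * snd a) end.

Record KVS (k : fld) := {
  vcar : Type;
  vzero : vcar;
  vadd : vcar -> vcar -> vcar;
  vopp : vcar -> vcar;
  vsmul : Kty k -> vcar -> vcar;
  vadd_assoc : forall x y z, vadd x (vadd y z) = vadd (vadd x y) z;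
  vadd_comm : forall x y, vadd x y = vadd y x;
  vadd_0 : forall x, vadd vzero x = x;
  vadd_opp : forall x, vadd x (vopp x) = vzero;
  vsmul_assoc : forall a b x, vsmul a (vsmul b x) = vsmul (Kmul a b) x;
  vsmul_1 : forall x, vsmul (Kone k) x = x;
  vsmul_distr_l : forall a x y, vsmul a (vadd x y) = vadd (vsmul a x) (vsmul a y);
  vsmul_distr_r : forall a b x, vsmul (Kadd a b) x = vadd (vsmul a x) (vsmul b x)
}.

(** * The Archimedean vector lattice F over K built from E:
    F = E if K = R, and F = E + iE (pairs) if K = C. *)
Definition Fcar (k : fld) (E : RVL) : Type :=
  match k with Kreal => car E | Kcomplex => (car E * car E)%type end.

Definition Fzero {k : fld} {E : RVL} : Fcar k E :=
  match k as k0 return Fcar k0 E with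
  | Kreal => zero E | Kcomplex => (zero E, zero E) end.
Definition Fadd {k : fld} {E : RVL} : Fcar k E -> Fcar k E -> Fcar k E :=
  match k as k0 return Fcar k0 E -> Fcar k0 E -> Fcar k0 E with
  | Kreal => fun x y => add E x y
  | Kcomplex => fun x y => (add E (fst x) (fst y), add E (snd x) (snd y)) end.
Definition Fopp {k : fld} {E : RVL} : Fcar k E -> Fcar k E :=
  match k as k0 return Fcar k0 E -> Fcar k0 E with
  | Kreal => fun x => opp E x
  | Kcomplex => fun x => (opp E (fst x), opp E (snd x)) end.
Definition Fsub {k : fld} {E : RVL} (x y : Fcar k E) : Fcar k E := Fadd x (Fopp y).
(** scalar multiplication by K: (a+ib)(f+ig) = (af - bg) + i(ag + bf) *)
Definition Fsmul {k : fld} {E : RVL} : Kty k -> Fcar k E -> Fcar k E :=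
  match k as k0 return Kty k0 -> Fcar k0 E -> Fcar k0 E with
  | Kreal => fun a x => smul E a x
  | Kcomplex => fun a x =>
      (add E (smul E (fst a) (fst x)) (opp E (smul E (snd a) (snd x))),
       add E (smul E (fst a) (snd x)) (smul E (snd a) (fst x))) end.
Definition Frsmul {k : fld} {E : RVL} (r : R) (x : Fcar k E) : Fcar k E :=
  Fsmul (Kofreal k r) x.
Definition Fconj {k : fld} {E : RVL} : Fcar k E -> Fcar k E :=
  match k as k0 return Fcar k0 E -> Fcar k0 E with
  | Kreal => fun x => x
  | Kcomplex => fun x => (fst x, opp E (snd x)) end.
Definition Fmod {k : fld} {E : RVL} : Fcar k E -> Fcar k E :=
  match k as k0 return Fcar k0 E -> Fcar k0 E with
  | Kreal => fun f => esup E (fun x => x = f \/ x = opp E f)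
  | Kcomplex => fun f =>
      (esup E (fun x => exists t, 0 <= t <= 2 * PI /\
          x = add E (smul E (cos t) (fst f)) (smul E (sin t) (snd f))),
       zero E) end.

Definition Fpos {k : fld} {E : RVL} (f : Fcar k E) : Prop := Fmod f = f.
Definition Freal {k : fld} {E : RVL} (f : Fcar k E) : Prop :=
  exists a b, Fpos a /\ Fpos b /\ f = Fsub a b.
Definition Fle {k : fld} {E : RVL} (f g : Fcar k E) : Prop := Fpos (Fsub g f).

Definition Fis_inf {k : fld} {E : RVL} (S : Fcar k E -> Prop) (m : Fcar k E) : Prop :=
  Freal m /\ (forall x, S x -> Fle m x) /\
  (forall b, Freal b -> (forall x, S x -> Fle b x) -> Fle b m).
(** chosen infimum (meaningful when it exists) *)
Definition Finf {k : fld} {E : RVL} (S : Fcar k E -> Prop) : Fcar k E :=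
  epsilon (inhabits Fzero) (Fis_inf S).

Definition geom_set {k : fld} {E : RVL} (f g : Fcar k E) : Fcar k E -> Prop :=
  fun x => exists t, 0 < t /\ x = Fadd (Frsmul t f) (Frsmul (/ t) g).
Definition geom_mean_closed (k : fld) (E : RVL) : Prop :=
  forall f g : Fcar k E, Fpos f -> Fpos g -> exists m, Fis_inf (geom_set f g) m.
Definition Fgm {k : fld} {E : RVL} (f g : Fcar k E) : Fcar k E :=
  Frsmul (/ 2) (Finf (geom_set f g)).

(** F is an Archimedean vector lattice over K (E is square mean closed if K = C) *)
Definition AVL_over (k : fld) (E : RVL) : Prop :=
  match k with Kreal => True | Kcomplex => square_mean_closed E end.

Definition CS_set {k : fld} {E : RVL} (V : KVS k)
  (T : vcar V -> vcar V -> Fcar k E) (u v : vcar V) : Fcar k E -> Prop :=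
  fun x => exists z : Kty k, z <> Kzero k /\
    x = Frsmul (/ Knorm z)
          (T (vadd V (vsmul V z u) (vopp V v)) (vadd V (vsmul V z u) (vopp V v))).

(* For z = t e^{-i th} with t > 0, sesquilinearity and conjugate symmetry give
     |z|^{-1} T(zu - v, zu - v) = (t T(u,u) + t^{-1} T(v,v)) - 2 Re(e^{-i th} T(u,v)),
   so the set in (1) is { x - 2y : x in the geometric-mean set of T(u,u), T(v,v),
   y in the set whose supremum defines |T(u,v)| } (for K = R only th in {0, pi}
   occurs).  An infimum minus twice a supremum is the infimum of the differences,
   which gives (1) and (2) with inf = 2 (T(u,u) ⊠ T(v,v)) - 2 |T(u,v)|; this
   infimum is positive (in F^+) because T is positive semidefinite, whence (3) and (4). *)
From Stdlib Require Import Reals Lra Lia List ClassicalEpsilon.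
Open Scope R_scope.

Section LinearCombinations.
Variable E : RVL.
Notation add := (add E). Notation opp := (opp E). Notation smul := (smul E).
Notation zero := (zero E).

Lemma add_0r x : add x zero = x.
Proof. rewrite add_comm; apply add_0. Qed.

Lemma smul_0 x : smul 0 x = zero.
Proof.
  assert (Hyy : add (smul 0 x) (smul 0 x) = smul 0 x)
    by (rewrite <- smul_distr_r, Rplus_0_r; reflexivity).
  set (y := smul 0 x) in *.
  rewrite <- (add_opp E y). rewrite <- Hyy at 2.
  rewrite <- add_assoc, add_opp, add_0r. reflexivity.
Qed.

Lemma smul_zero r : smul r zero = zero.
Proof. rewrite <- (smul_0 zero), smul_assoc, Rmult_0_r. reflexivity. Qed.

Lemma opp_smul x : opp x = smul (-1) x.
Proof.
  assert (Hx : add x (smul (-1) x) = zero).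
  { rewrite <- (smul_1 E x) at 1. rewrite <- smul_distr_r, Rplus_opp_r. apply smul_0. }
  rewrite <- (add_0r (opp x)), <- Hx, add_assoc, (add_comm E (opp x)), add_opp, add_0.
  reflexivity.
Qed.

(** [lin_sum env f j] is the combination [sum_i f (j + i) * env_i]; every
    linear expression over the atoms [env] normalises to one of these, so
    linear identities reduce to equalities of real coefficients. *)
Fixpoint lin_sum (env : list (car E)) (f : nat -> R) (j : nat) : car E :=
  match env with
  | nil => zero
  | x :: l => add (smul (f j) x) (lin_sum l f (S j))
  end.

Lemma lin_sum_ext env : forall f g j, (forall i, (j <= i)%nat -> f i = g i) ->
  lin_sum env f j = lin_sum env g j.
Proof.
  induction env as [|x l IH]; intros f g j Hfg; simpl; auto.
  rewrite Hfg by lia. f_equal. apply IH. intros; apply Hfg; lia.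
Qed.

Lemma lin_sum_zero env : forall j, lin_sum env (fun _ => 0) j = zero.
Proof.
  induction env as [|x l IH]; intros j; simpl; auto.
  rewrite IH, smul_0, add_0. reflexivity.
Qed.

Lemma lin_sum_add env : forall f g j,
  lin_sum env (fun i => f i + g i) j = add (lin_sum env f j) (lin_sum env g j).
Proof.
  induction env as [|x l IH]; intros f g j; simpl.
  - rewrite add_0. reflexivity.
  - rewrite IH, smul_distr_r, <- !add_assoc. f_equal.
    rewrite !add_assoc, (add_comm E (lin_sum l f _)). reflexivity.
Qed.

Lemma lin_sum_scale env : forall r f j,
  lin_sum env (fun i => r * f i) j = smul r (lin_sum env f j).
Proof.
  induction env as [|x l IH]; intros r f j; simpl.
  - rewrite smul_zero. reflexivity.
  - rewrite IH, smul_distr_l, smul_assoc. reflexivity.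
Qed.

Lemma lin_sum_opp env f j : lin_sum env (fun i => - f i) j = opp (lin_sum env f j).
Proof.
  rewrite opp_smul, <- lin_sum_scale. apply lin_sum_ext. intros; ring.
Qed.

Lemma lin_sum_atom env : forall n j,
  lin_sum env (fun i => if Nat.eqb (n + j) i then 1 else 0) j = nth n env zero.
Proof.
  induction env as [|x l IH]; intros [|n] j; cbn [lin_sum nth Nat.add]; auto.
  - rewrite Nat.eqb_refl, smul_1, (lin_sum_ext _ _ (fun _ => 0)), lin_sum_zero, add_0r;
      auto.
    intros i Hi. destruct (Nat.eqb_spec j i); auto. lia.
  - destruct (Nat.eqb_spec (S (n + j)) j); [lia|]. cbv iota.
    rewrite smul_0, add_0, <- (IH n (S j)). apply lin_sum_ext.
    intros. rewrite Nat.add_succ_r. reflexivity.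
Qed.

Inductive lin_term :=
  | LAtom (n : nat) | LZero | LAdd (a b : lin_term) | LOpp (a : lin_term)
  | LScale (r : R) (a : lin_term).

Fixpoint lin_eval (env : list (car E)) (e : lin_term) : car E :=
  match e with
  | LAtom n => nth n env zero
  | LZero => zero
  | LAdd a b => add (lin_eval env a) (lin_eval env b)
  | LOpp a => opp (lin_eval env a)
  | LScale r a => smul r (lin_eval env a)
  end.

Fixpoint lin_coef (e : lin_term) (i : nat) : R :=
  match e with
  | LAtom n => if Nat.eqb n i then 1 else 0
  | LZero => 0
  | LAdd a b => lin_coef a i + lin_coef b i
  | LOpp a => - lin_coef a i
  | LScale r a => r * lin_coef a i
  end.

Lemma lin_eval_sum env e : lin_eval env e = lin_sum env (lin_coef e) 0.
Proof.
  induction e as [n| |a IHa b IHb|a IHa|r a IHa]; simpl.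
  - rewrite <- (lin_sum_atom env n 0). apply lin_sum_ext. intros.
    rewrite Nat.add_0_r. reflexivity.
  - rewrite lin_sum_zero. reflexivity.
  - rewrite IHa, IHb, lin_sum_add. reflexivity.
  - rewrite IHa, lin_sum_opp. reflexivity.
  - rewrite IHa, lin_sum_scale. reflexivity.
Qed.
End LinearCombinations.

Ltac lin_index x l := match l with
  | x :: _ => constr:(O)
  | _ :: ?l' => let n := lin_index x l' in constr:(S n)
  end.
Ltac lin_add_atom t l := match constr:(tt) with
  | _ => let n := lin_index t l in constr:(l)
  | _ => constr:(t :: l)
  end.
Ltac lin_atoms E t l := match t with
  | add E ?a ?b => let l1 := lin_atoms E a l in lin_atoms E b l1
  | opp E ?a => lin_atoms E a l
  | smul E _ ?a => lin_atoms E a l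
  | zero E => l
  | _ => lin_add_atom t l
  end.
Ltac lin_reify E t env := match t with
  | add E ?a ?b =>
      let ra := lin_reify E a env in let rb := lin_reify E b env in constr:(LAdd ra rb)
  | opp E ?a => let ra := lin_reify E a env in constr:(LOpp ra)
  | smul E ?r ?a => let ra := lin_reify E a env in constr:(LScale r ra)
  | zero E => constr:(LZero)
  | _ => let n := lin_index t env in constr:(LAtom n)
  end.
Ltac lin_congr E := repeat match goal with
  | |- add E ?a ?b = add E ?c ?d => apply (f_equal2 (add E))
  | |- smul E ?r ?x = smul E ?s ?x => apply (f_equal2 (smul E)); [| reflexivity]
  | |- zero E = zero E => reflexivity
  end.

(** Reduces a linear identity in [E] to one real equation per atom. *)
Ltac lin_eq E := match goal with |- ?x = ?y =>
  let l0 := lin_atoms E x (@nil (car E)) in let l := lin_atoms E y l0 in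
  let ex := lin_reify E x l in let ey := lin_reify E y l in
  change (lin_eval E l ex = lin_eval E l ey);
  rewrite !(lin_eval_sum E l); cbn [lin_sum lin_coef Nat.eqb]; lin_congr E end.

Ltac lin_ring E := lin_eq E; ring.


Definition is_inf {A : Type} (le : A -> A -> Prop) (S : A -> Prop) (m : A) : Prop :=
  (forall x, S x -> le m x) /\ (forall b, (forall x, S x -> le b x) -> le b m).

Section Order.
Variable E : RVL.
Notation add := (add E). Notation opp := (opp E). Notation smul := (smul E).
Notation zero := (zero E). Notation le := (le E).

(** [esup (pm_set f)] is the modulus [|f|] of the real case and
    [esup (cos_sin_set f g)] the modulus [|f + i g|] of the complex case. *)
Definition pm_set (x : car E) : car E -> Prop := fun z => z = x \/ z = opp x.

Definition cos_sin_set (f g : car E) : car E -> Prop :=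
  fun x => exists t, 0 <= t <= 2 * PI /\ x = add (smul (cos t) f) (smul (sin t) g).

Definition geom_set_E (f g : car E) : car E -> Prop :=
  fun x => exists t, 0 < t /\ x = add (smul t f) (smul (/ t) g).

Lemma le_congr x y x' y' : x = x' -> y = y' -> le x' y' -> le x y.
Proof. intros -> ->; auto. Qed.

Lemma le_addl x y z : le x y -> le (add z x) (add z y).
Proof. intro H. rewrite !(add_comm E z). apply le_add; auto. Qed.

Lemma le_add2 x y x' y' : le x y -> le x' y' -> le (add x x') (add y y').
Proof.
  intros H1 H2. apply le_trans with (add y x'); [apply le_add | apply le_addl]; auto.
Qed.

Lemma le_sub_nonneg x y : le x y <-> le zero (add y (opp x)).
Proof.
  split; intro H.
  - apply le_congr with (add x (opp x)) (add y (opp x)); [lin_ring E | auto |].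
    apply le_add; auto.
  - apply le_congr with (add zero x) (add (add y (opp x)) x); [lin_ring E | lin_ring E |].
    apply le_add; auto.
Qed.

Lemma le_smul_mono r x y : 0 <= r -> le x y -> le (smul r x) (smul r y).
Proof.
  intros Hr H. apply le_sub_nonneg in H. apply le_sub_nonneg.
  apply le_congr with zero (smul r (add y (opp x))); [auto | lin_ring E |].
  apply le_smul; auto.
Qed.

Lemma le_opp x y : le x y -> le (opp y) (opp x).
Proof.
  intro H. apply le_sub_nonneg in H. apply le_sub_nonneg.
  eapply le_congr; [reflexivity | | exact H]. lin_ring E.
Qed.

Lemma is_sup_unique (S : car E -> Prop) s s' : is_sup le S s -> is_sup le S s' -> s = s'.
Proof. intros [H1 H2] [H3 H4]. apply le_antisym; auto. Qed.

Lemma esup_eq S s : is_sup le S s -> esup E S = s.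
Proof.
  intro H. unfold esup. apply (is_sup_unique S); auto.
  apply epsilon_spec. exists s; auto.
Qed.

Lemma is_inf_ext (S S' : car E -> Prop) m :
  (forall w, S w <-> S' w) -> is_inf le S m -> is_inf le S' m.
Proof.
  intros Heq [H1 H2]. split.
  - intros x Hx. apply H1, Heq; auto.
  - intros b Hb. apply H2. intros x Hx. apply Hb, Heq; auto.
Qed.

Lemma is_sup_pm_self x : is_sup le (pm_set x) x <-> le zero x.
Proof.
  split.
  - intros [H1 _]. assert (Hx : le (opp x) x) by (apply H1; right; auto).
    apply le_sub_nonneg in Hx.
    apply le_congr with (smul (/2) zero) (smul (/2) (add x (opp (opp x)))).
    + rewrite smul_zero; auto.
    + lin_eq E; field.
    + apply le_smul_mono; auto. lra.
  - intro H. split.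
    + intros z [-> | ->]; [apply le_refl |]. apply le_trans with zero; auto.
      apply le_congr with (opp x) (opp zero); [auto | lin_ring E |]. apply le_opp; auto.
    + intros b Hb. apply Hb. left; auto.
Qed.

Lemma pos_neg_decomp x : exists a b, le zero a /\ le zero b /\ x = add a (opp b).
Proof.
  destruct (sup2_ex E x zero) as [s [Hs _]].
  exists s, (add s (opp x)). split; [apply Hs; auto |]. split.
  - apply (proj1 (le_sub_nonneg x s)). apply Hs; auto.
  - lin_ring E.
Qed.

(** [cos t p] is a convex combination of [p] and [-p]. *)
Lemma is_sup_cos_sin_real p s : is_sup le (pm_set p) s -> is_sup le (cos_sin_set p zero) s.
Proof.
  intros [H1 H2]. split.
  - intros x [t [_ ->]]. pose proof (COS_bound t).
    apply le_congr with (add (smul ((1 + cos t) / 2) p) (smul ((1 - cos t) / 2) (opp p)))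
      (add (smul ((1 + cos t) / 2) s) (smul ((1 - cos t) / 2) s));
      [lin_eq E; field | lin_eq E; field |].
    apply le_add2; apply le_smul_mono; try lra; apply H1; [left | right]; auto.
  - intros b Hb. apply H2. pose proof PI_RGT_0. intros z [-> | ->]; apply Hb.
    + exists 0. split; [lra |]. rewrite cos_0, sin_0. lin_ring E.
    + exists PI. split; [lra |]. rewrite cos_PI, sin_PI. lin_ring E.
Qed.

Lemma is_inf_sub_scaled (X Y : car E -> Prop) g s c : 0 < c ->
  is_inf le X g -> is_sup le Y s ->
  is_inf le (fun w => exists x y, X x /\ Y y /\ w = add x (smul (- c) y))
    (add g (smul (- c) s)).
Proof.
  intros Hc [HX1 HX2] [HY1 HY2]. split.
  - intros w [x [y [Hx [Hy ->]]]]. apply le_add2; auto.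
    apply le_congr with (smul c (opp s)) (smul c (opp y)); try lin_ring E.
    apply le_smul_mono; [lra |]. apply le_opp; auto.
  - intros b Hb.
    assert (HYb : forall y, Y y -> le y (smul (/ c) (add g (opp b)))).
    { intros y Hy. assert (Hg : le (add b (smul c y)) g).
      { apply HX2. intros x Hx.
        apply le_congr with (add b (smul c y)) (add (add x (smul (- c) y)) (smul c y));
          [auto | lin_ring E |].
        apply le_add, Hb. exists x, y. auto. }
      apply le_congr with (smul (/ c) (add (add b (smul c y)) (opp b)))
        (smul (/ c) (add g (opp b))); [lin_eq E; field; lra | auto |].
      apply le_smul_mono; [left; apply Rinv_0_lt_compat; auto |].
      apply le_add; auto. }
    apply HY2, le_sub_nonneg, (le_smul_mono c) in HYb; [| lra].
    apply le_sub_nonneg.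
    eapply le_congr; [| | exact HYb]; [lin_ring E | lin_eq E; field; lra].
Qed.
End Order.

Lemma Fpos_R (E : RVL) (p : car E) : @Fpos Kreal E p <-> le E (zero E) p.
Proof.
  unfold Fpos, Fmod; simpl.
  destruct (sup2_ex E p (opp E p)) as [s Hs].
  change (is_sup (le E) (pm_set E p) s) in Hs.
  change (esup E (pm_set E p) = p <-> le E (zero E) p).
  rewrite (esup_eq E _ s Hs). split.
  - intros <-. exact (proj1 (is_sup_pm_self E s) Hs).
  - intro H. apply (is_sup_unique E _ _ _ Hs), is_sup_pm_self; auto.
Qed.

Lemma Fpos_C (E : RVL) (p1 p2 : car E) :
  @Fpos Kcomplex E (p1, p2) <-> p2 = zero E /\ le E (zero E) p1.
Proof.
  unfold Fpos, Fmod; simpl. split.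
  - intro H. injection H as H1 <-.
    destruct (sup2_ex E p1 (opp E p1)) as [s Hs].
    change (esup E (cos_sin_set E p1 (zero E)) = p1) in H1.
    rewrite (esup_eq E _ s (is_sup_cos_sin_real E _ _ Hs)) in H1. subst p1.
    split; auto. exact (proj1 (is_sup_pm_self E s) Hs).
  - intros [-> H]. f_equal.
    change (esup E (cos_sin_set E p1 (zero E)) = p1). apply esup_eq, is_sup_cos_sin_real, is_sup_pm_self; auto.
Qed.

Lemma Fle_R (E : RVL) (x y : car E) : @Fle Kreal E x y <-> le E x y.
Proof. unfold Fle, Fsub; simpl. rewrite Fpos_R. symmetry; apply le_sub_nonneg. Qed.

Lemma Fle_C (E : RVL) (p1 p2 q1 q2 : car E) :
  @Fle Kcomplex E (p1, p2) (q1, q2) <-> add E q2 (opp E p2) = zero E /\ le E p1 q1.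
Proof. unfold Fle, Fsub; simpl. rewrite Fpos_C, (le_sub_nonneg E p1 q1). tauto. Qed.

Lemma Freal_R (E : RVL) (x : car E) : @Freal Kreal E x.
Proof.
  destruct (pos_neg_decomp E x) as [a [b [Ha [Hb ->]]]].
  exists a, b. rewrite !Fpos_R. auto.
Qed.

Lemma Freal_C (E : RVL) (p1 p2 : car E) : @Freal Kcomplex E (p1, p2) <-> p2 = zero E.
Proof.
  split.
  - intros [[a1 a2] [[b1 b2] [Ha [Hb H]]]]. apply Fpos_C in Ha, Hb.
    destruct Ha as [-> _], Hb as [-> _]. injection H as _ ->. lin_ring E.
  - intros ->. destruct (pos_neg_decomp E p1) as [a [b [Ha [Hb ->]]]].
    exists (a, zero E), (b, zero E). rewrite !Fpos_C. repeat split; auto.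
    unfold Fsub; simpl. f_equal. lin_ring E.
Qed.

Lemma Freal_zero k E : @Freal k E Fzero.
Proof. destruct k; [apply Freal_R | apply Freal_C; auto]. Qed.

Lemma Fle_antisym k E (x y : Fcar k E) : Freal x -> Freal y -> Fle x y -> Fle y x -> x = y.
Proof.
  destruct k.
  - rewrite !Fle_R. intros. apply le_antisym; auto.
  - destruct x as [x1 x2], y as [y1 y2]. rewrite !Freal_C, !Fle_C.
    intros -> -> [_ H1] [_ H2]. f_equal. apply le_antisym; auto.
Qed.

Lemma Finf_eq k E (S : Fcar k E -> Prop) m : Fis_inf S m -> Finf S = m.
Proof.
  intro H. unfold Finf.
  assert (H' : Fis_inf S (epsilon (inhabits Fzero) (Fis_inf S)))
    by (apply epsilon_spec; exists m; auto).
  destruct H as [Hr [H1 H2]], H' as [Hr' [H1' H2']].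
  apply Fle_antisym; auto.
Qed.

Lemma Fis_inf_R E (S : car E -> Prop) m : @Fis_inf Kreal E S m <-> is_inf (le E) S m.
Proof.
  unfold Fis_inf, is_inf. setoid_rewrite Fle_R.
  pose proof (@Freal_R E). split; [intros (_ & H1 & H2) | intros (H1 & H2)]; auto.
Qed.

Lemma Fis_inf_C E (S : Fcar Kcomplex E -> Prop) m1 m2 :
  (forall w, S w -> snd w = zero E) ->
  (@Fis_inf Kcomplex E S (m1, m2) <->
   m2 = zero E /\ is_inf (le E) (fun x1 => S (x1, zero E)) m1).
Proof.
  intro HS. unfold Fis_inf, is_inf. split.
  - intros [Hr [H1 H2]]. apply Freal_C in Hr. subst m2. split; auto. split.
    + intros x Hx. apply H1, Fle_C in Hx. tauto.
    + intros b Hb. assert (Hbm : Fle (k := Kcomplex) (b, zero E) (m1, zero E)).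
      { apply H2; [apply Freal_C; auto |]. intros [x1 x2] Hx.
        pose proof (HS _ Hx) as Hx2. simpl in Hx2. subst x2.
        apply Fle_C. split; [lin_ring E | apply Hb; auto]. }
      apply Fle_C in Hbm. tauto.
  - intros [-> [H1 H2]]. split; [apply Freal_C; auto |]. split.
    + intros [x1 x2] Hx. pose proof (HS _ Hx) as Hx2. simpl in Hx2. subst x2.
      apply Fle_C. split; [lin_ring E | apply H1; auto].
    + intros [b1 b2] Hbr Hb. apply Freal_C in Hbr. subst b2.
      apply Fle_C. split; [lin_ring E |]. apply H2. intros x Hx.
      apply Hb, Fle_C in Hx. tauto.
Qed.

Lemma Fpos_rsmul k E r (p : Fcar k E) : 0 <= r -> Fpos p -> Fpos (Frsmul r p).
Proof.
  destruct k.
  - rewrite !Fpos_R. apply le_smul.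
  - destruct p as [p1 p2]. rewrite Fpos_C. intros Hr [-> H].
    unfold Frsmul; simpl. apply Fpos_C. split; [lin_ring E |].
    apply le_congr with (zero E) (smul E r p1); [auto | lin_ring E | apply le_smul; auto].
Qed.

Lemma Fsub_zero k E (p : Fcar k E) : Fsub p Fzero = p.
Proof. destruct k; [| destruct p]; unfold Fsub; simpl; [| f_equal]; lin_ring E. Qed.

Lemma Fle0_Fpos k E (p : Fcar k E) : Fle Fzero p <-> Fpos p.
Proof. unfold Fle. rewrite Fsub_zero. tauto. Qed.

Lemma Fle_sub_nonneg k E (X Y : Fcar k E) : Fpos Y -> Fle (Fsub X Y) X.
Proof.
  unfold Fle. replace (Fsub X (Fsub X Y)) with Y; auto.
  destruct k; [| destruct X, Y]; unfold Fsub; simpl; [| f_equal]; lin_ring E.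
Qed.

Lemma Fsub_eq_self k E (X Y : Fcar k E) : Fsub X Y = X <-> Y = Fzero.
Proof.
  split; [| intros ->; apply Fsub_zero].
  destruct k; [| destruct X as [x1 x2], Y as [y1 y2]]; unfold Fsub; simpl; intro H.
  - transitivity (add E (opp E (add E X (opp E Y))) X); [lin_ring E |].
    rewrite H. lin_ring E.
  - injection H as H1 H2. f_equal.
    + transitivity (add E (opp E (add E x1 (opp E y1))) x1); [lin_ring E |].
      rewrite H1. lin_ring E.
    + transitivity (add E (opp E (add E x2 (opp E y2))) x2); [lin_ring E |].
      rewrite H2. lin_ring E.
Qed.

Lemma Frsmul_eq0 k E r (M : Fcar k E) : r <> 0 -> Frsmul r M = Fzero <-> M = Fzero.
Proof.
  intro Hr. split; [| intros ->; destruct k; simpl; [| f_equal]; lin_ring E].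
  destruct k; [| destruct M as [m1 m2]]; unfold Frsmul; simpl; intro H.
  - transitivity (smul E (/ r) (smul E r M)); [lin_eq E; field; auto |].
    rewrite H. lin_ring E.
  - injection H as H1 H2. f_equal.
    + transitivity (smul E (/ r) (add E (smul E r m1) (opp E (smul E 0 m2))));
        [lin_eq E; field; auto |].
      rewrite H1. lin_ring E.
    + transitivity (smul E (/ r) (add E (smul E r m2) (smul E 0 m1)));
        [lin_eq E; field; auto |].
      rewrite H2. lin_ring E.
Qed.

Lemma unit_circle_polar p q :
  p * p + q * q = 1 -> exists t, 0 <= t <= 2 * PI /\ cos t = p /\ sin t = q.
Proof.
  intro H.
  assert (Hp : -1 <= p <= 1) by nra.
  assert (Hs : sqrt (1 - p²) = Rabs q)
    by (rewrite <- sqrt_Rsqr_abs; f_equal; unfold Rsqr; lra).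
  pose proof (acos_bound p). pose proof PI_RGT_0.
  destruct (Rle_or_lt 0 q) as [Hq | Hq].
  - exists (acos p). split; [lra |]. split; [apply cos_acos; auto |].
    rewrite sin_acos, Hs by auto. apply Rabs_right; lra.
  - exists (2 * PI - acos p). split; [lra |].
    rewrite cos_minus, sin_minus, cos_2PI, sin_2PI, cos_acos, sin_acos, Hs by auto.
    rewrite Rabs_left by auto. split; ring.
Qed.

Section VectorSpace.
Variables (k : fld) (V : KVS k).
Notation vadd := (vadd V). Notation vsmul := (vsmul V). Notation vzero := (vzero V).
Notation vopp := (vopp V).

Lemma vadd_0r x : vadd x vzero = x.
Proof. rewrite vadd_comm; apply vadd_0. Qed.

Lemma vsmul_0 x : vsmul (Kzero k) x = vzero.
Proof.
  assert (H : vadd (vsmul (Kzero k) x) (vsmul (Kzero k) x) = vsmul (Kzero k) x).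
  { rewrite <- vsmul_distr_r. f_equal. destruct k; simpl; try f_equal; ring. }
  set (y := vsmul (Kzero k) x) in *.
  rewrite <- (vadd_opp V y). rewrite <- H at 2.
  rewrite <- vadd_assoc, vadd_opp, vadd_0r. reflexivity.
Qed.

Lemma vopp_smul x : vopp x = vsmul (Kofreal k (-1)) x.
Proof.
  set (y := vsmul (Kofreal k (-1)) x).
  assert (H : vadd x y = vzero).
  { unfold y. rewrite <- (vsmul_1 V x) at 1. rewrite <- vsmul_distr_r, <- (vsmul_0 x).
    f_equal. destruct k; simpl; try f_equal; ring. }
  rewrite <- (vadd_0r (vopp x)), <- H, vadd_assoc, (vadd_comm V (vopp x)), vadd_opp, vadd_0.
  reflexivity.
Qed.
End VectorSpace.

Lemma Knorm_nonneg k (z : Kty k) : 0 <= Knorm z.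
Proof. destruct k; simpl; [apply Rabs_pos | apply sqrt_pos]. Qed.

Section Sesquilinear.
Variables (k : fld) (E : RVL) (V : KVS k) (T : vcar V -> vcar V -> Fcar k E).
Hypothesis Hlin : forall (a b : Kty k) (v1 v2 w : vcar V),
  T (vadd V (vsmul V a v1) (vsmul V b v2)) w = Fadd (Fsmul a (T v1 w)) (Fsmul b (T v2 w)).
Hypothesis Hclin : forall (a b : Kty k) (w v1 v2 : vcar V),
  T w (vadd V (vsmul V a v1) (vsmul V b v2)) =
  Fadd (Fsmul (Kconj a) (T w v1)) (Fsmul (Kconj b) (T w v2)).

Lemma T_shift_expand u v z :
  T (vadd V (vsmul V z u) (vopp V v)) (vadd V (vsmul V z u) (vopp V v)) =
  Fadd (Fsmul z (Fadd (Fsmul (Kconj z) (T u u)) (Fsmul (Kconj (Kofreal k (-1))) (T u v))))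
       (Fsmul (Kofreal k (-1))
          (Fadd (Fsmul (Kconj z) (T v u)) (Fsmul (Kconj (Kofreal k (-1))) (T v v)))).
Proof. rewrite vopp_smul, Hlin, !Hclin. reflexivity. Qed.

Lemma CS_set_nonneg (Hpsd : forall v, Fpos (T v v)) u v x :
  CS_set V T u v x -> Fle Fzero x.
Proof.
  intros [z [_ ->]]. apply Fle0_Fpos, Fpos_rsmul; auto.
  destruct (Knorm_nonneg k z) as [H | <-].
  - left; apply Rinv_0_lt_compat; auto.
  - rewrite Rinv_0. lra.
Qed.
End Sesquilinear.

Section RealCase.
Variables (E : RVL) (V : KVS Kreal) (T : vcar V -> vcar V -> Fcar Kreal E).
Hypothesis Hsym : forall u v, T u v = Fconj (T v u).
Hypothesis Hlin : forall (a b : Kty Kreal) (v1 v2 w : vcar V),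
  T (vadd V (vsmul V a v1) (vsmul V b v2)) w = Fadd (Fsmul a (T v1 w)) (Fsmul b (T v2 w)).
Hypothesis Hclin : forall (a b : Kty Kreal) (w v1 v2 : vcar V),
  T w (vadd V (vsmul V a v1) (vsmul V b v2)) =
  Fadd (Fsmul (Kconj a) (T w v1)) (Fsmul (Kconj b) (T w v2)).

Lemma T_shift_real u v (z : R) :
  T (vadd V (vsmul V z u) (vopp V v)) (vadd V (vsmul V z u) (vopp V v)) =
  add E (add E (smul E (z * z) (T u u)) (smul E (- 2 * z) (T u v))) (T v v).
Proof.
  rewrite T_shift_expand by auto. simpl. rewrite (Hsym v u). simpl. lin_ring E.
Qed.

Lemma CS_set_real_iff u v w :
  CS_set V T u v w <-> exists x y, geom_set_E E (T u u) (T v v) x /\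
    pm_set E (T u v) y /\ w = add E x (smul E (- 2) y).
Proof.
  unfold CS_set. split.
  - intros [z [Hz ->]]. simpl in Hz |- *. rewrite T_shift_real.
    destruct (Rlt_or_le 0 z) as [Hpos | Hneg].
    + exists (add E (smul E z (T u u)) (smul E (/ z) (T v v))), (T u v).
      split; [exists z; auto |]. split; [left; auto |].
      rewrite Rabs_right by lra. lin_eq E; field; lra.
    + exists (add E (smul E (- z) (T u u)) (smul E (/ - z) (T v v))), (opp E (T u v)).
      split; [exists (- z); split; [lra | auto] |]. split; [right; auto |].
      rewrite Rabs_left by lra. lin_eq E; field; lra.
  - intros [x [y [[t [Ht ->]] [[-> | ->] ->]]]].
    + exists t. split; [simpl; lra |]. simpl. rewrite T_shift_real, Rabs_right by lra.
      lin_eq E; field; lra.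
    + exists (- t). split; [simpl; lra |]. simpl. rewrite T_shift_real, Rabs_left by lra.
      lin_eq E; field; lra.
Qed.

Lemma CS_inf_real (HF : geom_mean_closed Kreal E) (Hpsd : forall v, Fpos (T v v)) u v :
  exists M, Fis_inf (CS_set V T u v) M /\
    Fmod (T u v) = Fsub (Fgm (T u u) (T v v)) (Frsmul (/ 2) M).
Proof.
  destruct (HF _ _ (Hpsd u) (Hpsd v)) as [g Hg].
  destruct (sup2_ex E (T u v) (opp E (T u v))) as [s Hs].
  exists (add E g (smul E (- 2) s)). split.
  - apply Fis_inf_R. eapply is_inf_ext; [intro w; symmetry; apply CS_set_real_iff |].
    apply (is_inf_sub_scaled E _ _ g s 2); [lra | apply Fis_inf_R; exact Hg | exact Hs].
  - unfold Fgm. rewrite (Finf_eq _ _ _ _ Hg). simpl.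
    rewrite (esup_eq E _ s Hs). lin_eq E; field.
Qed.
End RealCase.

Lemma geom_set_complex_iff E (a c x : car E) :
  geom_set (k := Kcomplex) (a, zero E) (c, zero E) (x, zero E) <-> geom_set_E E a c x.
Proof.
  unfold geom_set, geom_set_E; simpl. split.
  - intros [t [Ht H]]. exists t. split; auto. injection H as -> _. lin_ring E.
  - intros [t [Ht ->]]. exists t. split; auto. f_equal; lin_ring E.
Qed.

Lemma geom_set_complex_snd E (a c : car E) w :
  geom_set (k := Kcomplex) (a, zero E) (c, zero E) w -> snd w = zero E.
Proof. intros [t [_ ->]]. simpl. lin_ring E. Qed.

Section ComplexCase.
Variables (E : RVL) (V : KVS Kcomplex) (T : vcar V -> vcar V -> Fcar Kcomplex E).
Hypothesis Hsym : forall u v, T u v = Fconj (T v u).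
Hypothesis Hlin : forall (a b : Kty Kcomplex) (v1 v2 w : vcar V),
  T (vadd V (vsmul V a v1) (vsmul V b v2)) w = Fadd (Fsmul a (T v1 w)) (Fsmul b (T v2 w)).
Hypothesis Hclin : forall (a b : Kty Kcomplex) (w v1 v2 : vcar V),
  T w (vadd V (vsmul V a v1) (vsmul V b v2)) =
  Fadd (Fsmul (Kconj a) (T w v1)) (Fsmul (Kconj b) (T w v2)).

Section FixedVectors.
Variables (u v : vcar V) (a b1 b2 c : car E).
Hypotheses (Huu : T u u = (a, zero E)) (Hvv : T v v = (c, zero E)) (Huv : T u v = (b1, b2)).

Lemma T_shift_complex (x y : R) :
  T (vadd V (vsmul V (x, y) u) (vopp V v)) (vadd V (vsmul V (x, y) u) (vopp V v)) =
  (add E (add E (smul E (x * x + y * y) a)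
     (smul E (- 2) (add E (smul E x b1) (smul E (- y) b2)))) c, zero E).
Proof.
  rewrite T_shift_expand by auto. rewrite (Hsym v u), Huu, Hvv, Huv. simpl.
  f_equal; lin_ring E.
Qed.

Lemma CS_set_complex_snd w : CS_set V T u v w -> snd w = zero E.
Proof. intros [[x y] [_ ->]]. rewrite T_shift_complex. simpl. lin_ring E. Qed.

Lemma CS_set_complex_iff w :
  CS_set V T u v (w, zero E) <-> exists x y, geom_set_E E a c x /\
    cos_sin_set E b1 b2 y /\ w = add E x (smul E (- 2) y).
Proof.
  unfold CS_set. split.
  - intros [[x y] [Hz H]]. rewrite T_shift_complex in H. simpl in Hz, H.
    injection H as -> _.
    assert (Hxy : 0 < x * x + y * y).
    { destruct (Req_dec x 0) as [-> | Hx].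
      - destruct (Req_dec y 0) as [-> | Hy]; [exfalso; apply Hz; reflexivity |].
        pose proof (Rsqr_pos_lt y Hy). unfold Rsqr in *. lra.
      - pose proof (Rsqr_pos_lt x Hx). unfold Rsqr in *. nra. }
    assert (Hr : 0 < sqrt (x * x + y * y)) by (apply sqrt_lt_R0; auto).
    assert (Hr2 : x * x + y * y = sqrt (x * x + y * y) * sqrt (x * x + y * y))
      by (symmetry; apply sqrt_sqrt; lra).
    set (r := sqrt (x * x + y * y)) in *. rewrite Hr2. clearbody r.
    destruct (unit_circle_polar (x / r) (- y / r)) as [th [Hth [Hco Hsi]]].
    { replace (x / r * (x / r) + - y / r * (- y / r)) with ((x * x + y * y) / (r * r))
        by (field; lra).
      rewrite Hr2. field. lra. }
    exists (add E (smul E r a) (smul E (/ r) c)),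
      (add E (smul E (cos th) b1) (smul E (sin th) b2)).
    split; [exists r; auto |]. split; [exists th; auto |].
    rewrite Hco, Hsi. lin_eq E; field; lra.
  - intros [x [y [[t [Ht ->]] [[th [Hth ->]] ->]]]].
    pose proof (sin2_cos2 th) as Hsc. unfold Rsqr in Hsc.
    assert (Ht2 : t * cos th * (t * cos th) + - (t * sin th) * - (t * sin th) = t * t)
      by nra.
    exists (t * cos th, - (t * sin th)). split.
    { intro H. injection H as H1 H2. nra. }
    rewrite T_shift_complex. simpl. rewrite Ht2, sqrt_square by lra.
    f_equal; lin_eq E; field; lra.
Qed.
End FixedVectors.

Lemma CS_inf_complex (HE : square_mean_closed E) (HF : geom_mean_closed Kcomplex E)
  (Hpsd : forall v, Fpos (T v v)) u v :
  exists M, Fis_inf (CS_set V T u v) M /\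
    Fmod (T u v) = Fsub (Fgm (T u u) (T v v)) (Frsmul (/ 2) M).
Proof.
  assert (Hdiag : forall w, exists d, T w w = (d, zero E)).
  { intro w. pose proof (Hpsd w) as H. destruct (T w w) as [d1 d2].
    apply Fpos_C in H as [-> _]. eauto. }
  destruct (Hdiag u) as [a Huu], (Hdiag v) as [c Hvv], (T u v) as [b1 b2] eqn:Huv.
  destruct (HE b1 b2) as [s Hs].
  destruct (HF _ _ (Hpsd u) (Hpsd v)) as [[g g2] Hg].
  pose proof Hg as Hg'. rewrite Huu, Hvv in Hg'.
  apply Fis_inf_C in Hg' as [-> Hg']; [| apply geom_set_complex_snd].
  exists (add E g (smul E (- 2) s), zero E). split.
  - apply Fis_inf_C; [apply (CS_set_complex_snd u v a b1 b2 c); auto |]. split; auto.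
    eapply is_inf_ext; [intro w; symmetry; apply (CS_set_complex_iff u v a b1 b2 c); auto |].
    apply (is_inf_sub_scaled E _ _ g s 2); [lra | | exact Hs].
    eapply is_inf_ext; [intro w; apply geom_set_complex_iff | exact Hg'].
  - unfold Fgm. rewrite (Finf_eq _ _ _ _ Hg). simpl.
    rewrite (esup_eq E _ s Hs). f_equal; lin_eq E; field.
Qed.
End ComplexCase.

Theorem theorem3p1 (k : fld) (E : RVL) (HE : AVL_over k E)
  (HF : geom_mean_closed k E) (V : KVS k)
  (T : vcar V -> vcar V -> Fcar k E)
  (Hpsd : forall v, Fpos (T v v))
  (Hsym : forall u v, T u v = Fconj (T v u))
  (Hlin : forall (a b : Kty k) (v1 v2 w : vcar V),
     T (vadd V (vsmul V a v1) (vsmul V b v2)) w =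
     Fadd (Fsmul a (T v1 w)) (Fsmul b (T v2 w)))
  (Hclin : forall (a b : Kty k) (w v1 v2 : vcar V),
     T w (vadd V (vsmul V a v1) (vsmul V b v2)) =
     Fadd (Fsmul (Kconj a) (T w v1)) (Fsmul (Kconj b) (T w v2))) :
  forall u v : vcar V,
    (exists m, Fis_inf (CS_set V T u v) m) /\
    Fmod (T u v) = Fsub (Fgm (T u u) (T v v)) (Frsmul (/ 2) (Finf (CS_set V T u v))) /\
    Fle (Fmod (T u v)) (Fgm (T u u) (T v v)) /\
    (Fmod (T u v) = Fgm (T u u) (T v v) <-> Finf (CS_set V T u v) = Fzero).
Proof.
  intros u v.
  assert (Hinf : exists M, Fis_inf (CS_set V T u v) M /\
    Fmod (T u v) = Fsub (Fgm (T u u) (T v v)) (Frsmul (/ 2) M))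
    by (destruct k; [apply CS_inf_real | apply CS_inf_complex]; auto).
  destruct Hinf as [M [HM Hmod]].
  rewrite (Finf_eq _ _ _ _ HM).
  assert (HM0 : Fpos M).
  { apply Fle0_Fpos. destruct HM as [_ [_ Hlb]].
    apply Hlb; [apply Freal_zero | intros x Hx; eapply CS_set_nonneg; eauto]. }
  rewrite Hmod, Fsub_eq_self, Frsmul_eq0 by lra.
  split; [eauto |]. split; [reflexivity |]. split; [| tauto].
  apply Fle_sub_nonneg, Fpos_rsmul; auto. lra.
Qed.
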